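(* For every $\varepsilon_0\in[0,1/4)$ and integer $w\ge1$, any $\varepsilon_0$-error online algorithm computing the width-$w$ $\mathrm{Tribes}$ function on the $\mathrm{Tribes}$ instance must reveal $\Omega(2^w)$ tribes in expectation (the implied constant may depend on $\varepsilon_0$ but not on $w$).
   Context: The $\mathrm{Tribes}$ instance of width $w$: variables $(x_{i,j})_{i\in[2^w],j\in[w]}$, $f(x)=\bigvee_{i=1}^{2^w}\bigwedge_{j=1}^w x_{i,j}$, input $x$ uniform, and for each $i$ the costs $(c_{i,1},\dots,c_{i,w})$ are an independent uniformly random permutation of $[w]$. Online priced query model: the algorithm maintains investments $\theta$ (initially $0$), increasing one coordinate by a positive amount per step; $x_{i,j}$ is revealed once $\theta_{i,j}\ge c_{i,j}$. An algorithm reveals the $i$-th tribe if at least one of $x_{i,1},\dots,x_{i,w}$ is revealed to it. It is $\varepsilon_0$-error if it outputs $f(x)$ except with probability at most $\varepsilon_0$ over the input, costs and its randomness. *)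

From mathcomp Require Import all_boot all_order all_algebra.
From mathcomp Require Import perm.
From mathcomp Require Import all_classical all_reals all_analysis.

Set Implicit Arguments.
Unset Strict Implicit.
Unset Printing Implicit Defensive.

Import Order.TTheory GRing.Theory Num.Theory.
Local Open Scope ring_scope.

(* Variables x_{i,j}, i in [2^w] (tribe), j in [w] (position in tribe). *)
Definition tvar (w : nat) := ('I_(2 ^ w) * 'I_w)%type.

Definition tinput (w : nat) := {ffun tvar w -> bool}.
(* for each tribe i, a permutation sigma_i of [w]; c_{i,j} = sigma_i(j) + 1 in {1..w} *)
Definition tcosts (w : nat) := {ffun 'I_(2 ^ w) -> {perm 'I_w}}.

Definition cost (w : nat) (c : tcosts w) (v : tvar w) : nat := (c v.1 v.2).+1.

Definition tribes_fun (w : nat) (x : tinput w) : bool :=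
  [exists i : 'I_(2 ^ w), [forall j : 'I_w, x (i, j)]].

(* One step of interaction: the algorithm increased theta_v by amount a and
   observed whether x_v is now revealed (Some value) or not (None). *)
Record obs (R : realType) (w : nat) := Obs {
  ob_var : tvar w; ob_amt : R; ob_val : option bool }.

Inductive action (R : realType) (w : nat) :=
| Output of bool
| Invest of tvar w & R.

Definition det_alg (R : realType) (w : nat) := seq (obs R w) -> action R w.

Definition valid_alg (R : realType) (w : nat) (A : det_alg R w) : Prop :=
  forall h v a, A h = Invest v a -> 0 < a.

Record state (R : realType) (w : nat) := St {
  st_out : option bool; st_hist : seq (obs R w); st_theta : tvar w -> R }.

Definition step (R : realType) (w : nat) (A : det_alg R w) (x : tinput w)
  (c : tcosts w) (s : state R w) : state R w :=
  match st_out s with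
  | Some _ => s
  | None =>
    match A (st_hist s) with
    | Output b => St (Some b) (st_hist s) (st_theta s)
    | Invest v a =>
        let th := fun u => if u == v then st_theta s u + a else st_theta s u in
        let o := if ((cost c v)%:R <= th v) then Some (x v) else None in
        St None (rcons (st_hist s) (Obs v a o)) th
    end
  end.

Fixpoint run (R : realType) (w : nat) (A : det_alg R w) (x : tinput w)
  (c : tcosts w) (n : nat) : state R w :=
  match n with
  | 0 => St None [::] (fun _ => 0)
  | n.+1 => step A x c (run A x c n)
  end.

Definition reveals_tribe (R : realType) (w : nat) (A : det_alg R w)
  (x : tinput w) (c : tcosts w) (i : 'I_(2 ^ w)) : Prop :=
  exists n (j : 'I_w), (cost c (i, j))%:R <= st_theta (run A x c n) (i, j).

Definition num_revealed (R : realType) (w : nat) (A : det_alg R w)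
  (x : tinput w) (c : tcosts w) : nat :=
  #|[set i : 'I_(2 ^ w) | `[< reveals_tribe A x c i >]]|.

Definition outputs_correctly (R : realType) (w : nat) (A : det_alg R w)
  (x : tinput w) (c : tcosts w) : Prop :=
  exists n, st_out (run A x c n) = Some (tribes_fun x).

Definition errs (R : realType) (w : nat) (A : det_alg R w)
  (x : tinput w) (c : tcosts w) : bool :=
  ~~ `[< outputs_correctly A x c >].

Definition avg_xc (R : realType) (w : nat) (F : tinput w -> tcosts w -> R) : R :=
  (#|{: tinput w}| * #|{: tcosts w}|)%:R^-1 *
  \sum_(x : tinput w) \sum_(c : tcosts w) F x c.

(* A randomized algorithm: a random seed om drawn from probability P selects a
   deterministic algorithm A om; its behaviour must be measurable in the seed. *)
Definition randomized_alg (R : realType) (w : nat) (d : measure_display)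
  (Om : measurableType d) (A : Om -> det_alg R w) : Prop :=
  [/\ forall om, valid_alg (A om),
      forall x c, measurable_fun setT (fun om => ((errs (A om) x c)%:R : R)) &
      forall x c, measurable_fun setT (fun om => ((num_revealed (A om) x c)%:R : R))].

Definition error_prob (R : realType) (w : nat) (d : measure_display)
  (Om : measurableType d) (P : probability Om R) (A : Om -> det_alg R w) : \bar R :=
  (\int[P]_om (avg_xc (fun x c => ((errs (A om) x c)%:R : R)))%:E)%E.

Definition expected_revealed (R : realType) (w : nat) (d : measure_display)
  (Om : measurableType d) (P : probability Om R) (A : Om -> det_alg R w) : \bar R :=
  (\int[P]_om (avg_xc (fun x c => ((num_revealed (A om) x c)%:R : R)))%:E)%E.

(* For a fixed deterministic algorithm and fixed costs, take an input x with
   f(x) = 0 on which the algorithm is correct, and a tribe i it never reveals.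
   Setting tribe i to all ones does not change the run, so the algorithm still
   answers 0 while f = 1; every input so obtained has i as its only full tribe,
   hence comes from at most 2^w inputs x.  Thus, summed over x with f(x) = 0,
   the unrevealed tribes number at most 2^w times the errors.  Since
   Pr[f(x) = 0] = (1 - 2^-w)^(2^w) >= 1/4, this gives
   2^w / 4 <= E[revealed] + 2^w Pr[error], and integrating over the random seed
   yields E[revealed] >= (1/4 - eps0) 2^w. *)
From mathcomp Require Import all_boot all_order all_algebra.
From mathcomp Require Import perm.
From mathcomp Require Import all_classical all_reals all_analysis.
From mathcomp Require Import measurable_realfun.
From mathcomp Require Import ring lra zify.
Import Order.TTheory GRing.Theory Num.Theory.
Local Open Scope ring_scope.
Set Implicit Arguments.
Unset Strict Implicit.

Section Runs.
Variables (R : realType) (w : nat) (A : det_alg R w) (c : tcosts w).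

Lemma step_agree (x x' : tinput w) (s : state R w) :
  (forall v, (cost c v)%:R <= st_theta (step A x c s) v -> x v = x' v) ->
  step A x c s = step A x' c s.
Proof.
rewrite /step; case: (st_out s) => //; case: (A (st_hist s)) => // v a /= hx.
by case: ifP => // hv; rewrite hx.
Qed.

Lemma run_agree (x x' : tinput w) :
  (forall n v, (cost c v)%:R <= st_theta (run A x c n) v -> x v = x' v) ->
  forall n, run A x c n = run A x' c n.
Proof. by move=> hx; elim=> [//|n IH] /=; rewrite -IH; apply: step_agree; apply: hx n.+1. Qed.

Lemma run_out_mono (x : tinput w) n m b :
  (n <= m)%N -> st_out (run A x c n) = Some b -> st_out (run A x c m) = Some b.
Proof.
move=> /subnKC <- hn; elim: (m - n)%N => [|k IH]; first by rewrite addn0.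
by rewrite addnS /= /step IH.
Qed.

Lemma run_out_unique (x : tinput w) n m b b' :
  st_out (run A x c n) = Some b -> st_out (run A x c m) = Some b' -> b = b'.
Proof.
move=> /(run_out_mono (leq_maxl n m)) hn /(run_out_mono (leq_maxr n m)).
by rewrite hn => -[].
Qed.

Lemma errs_of_same_run (x x' : tinput w) :
  (forall n, run A x c n = run A x' c n) -> tribes_fun x != tribes_fun x' ->
  ~~ errs A x c -> errs A x' c.
Proof.
move=> hrun /eqP hf /negPn/asboolP[n hn]; apply/negP => /asboolP[m hm].
by apply: hf; rewrite hrun in hn; apply: run_out_unique hn hm.
Qed.

Lemma run_indep_hidden_tribe (x x' : tinput w) (i : 'I_(2 ^ w)) :
  ~ reveals_tribe A x c i -> (forall v, v.1 != i -> x v = x' v) ->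
  forall n, run A x c n = run A x' c n.
Proof.
move=> hi hx; apply: run_agree => n [k j] hv; apply: hx => /=.
by apply: contra_notN hi => /eqP <-; exists n, j.
Qed.
End Runs.

Definition fill_tribe w (i : 'I_(2 ^ w)) (x : tinput w) : tinput w :=
  [ffun v => (v.1 == i) || x v].

Definition hiding_zeros (R : realType) w (A : det_alg R w) (c : tcosts w) (i : 'I_(2 ^ w)) :=
  [set x : tinput w | [&& ~~ tribes_fun x, ~~ errs A x c & ~~ `[< reveals_tribe A x c i >]]].

Definition fooled_ones (R : realType) w (A : det_alg R w) (c : tcosts w) (i : 'I_(2 ^ w)) :=
  [set x : tinput w | [&& errs A x c, [forall j, x (i, j)] &
                          [forall k, (k != i) ==> ~~ [forall j, x (k, j)]]]].

Lemma sum_nat_in_card (T : finType) (S : {set T}) : (\sum_t (t \in S : nat))%N = #|S|.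
Proof. by rewrite -sum1_card [RHS]big_mkcond /=; apply: eq_bigr => t _; case: (t \in S). Qed.

Section Switching.
Variables (R : realType) (w : nat) (A : det_alg R w) (c : tcosts w).

Lemma fill_tribe_fooled (i : 'I_(2 ^ w)) (x : tinput w) :
  x \in hiding_zeros A c i -> fill_tribe i x \in fooled_ones A c i.
Proof.
rewrite !inE => /and3P[hf he /asboolPn hi].
have fill_full k j : fill_tribe i x (k, j) = (k == i) || x (k, j) by rewrite ffunE.
apply/and3P; split.
- have agree v : v.1 != i -> x v = fill_tribe i x v by rewrite ffunE => /negbTE ->.
  have same_run := run_indep_hidden_tribe hi agree.
  have full : tribes_fun (fill_tribe i x).
    by apply/existsP; exists i; apply/forallP => j; rewrite fill_full eqxx.
  by apply: (errs_of_same_run same_run _ he); rewrite (negbTE hf) full.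
- by apply/forallP => j; rewrite fill_full eqxx.
- apply/forallP => k; apply/implyP => /negbTE hk; apply: contra hf => /forallP hall.
  by apply/existsP; exists k; apply/forallP => j; have := hall j; rewrite fill_full hk.
Qed.

Lemma card_hiding_zeros (i : 'I_(2 ^ w)) :
  (#|hiding_zeros A c i| <= 2 ^ w * #|fooled_ones A c i|)%N.
Proof.
pose split_tribe (x : tinput w) := ([ffun j => x (i, j)] : {ffun 'I_w -> bool}, fill_tribe i x).
have split_inj : injective split_tribe.
  move=> x y [/ffunP ei /ffunP eo]; apply/ffunP => -[k j].
  have := eo (k, j); have := ei j; rewrite !ffunE /=.
  by case: eqP => [-> //|_ _ /= ->].
have card_tribe : #|[set: {ffun 'I_w -> bool}]| = (2 ^ w)%N.
  by rewrite cardsT card_ffun card_bool card_ord.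
apply: (@leq_trans #|finset.setX [set: {ffun 'I_w -> bool}] (fooled_ones A c i)|);
  last by rewrite cardsX card_tribe.
rewrite -(card_imset _ split_inj); apply: subset_leq_card.
apply/fintype.subsetP => _ /imsetP[x hx ->].
by rewrite finset.in_setX finset.in_setT fill_tribe_fooled.
Qed.

Lemma zero_input_weight (x : tinput w) :
  ((~~ tribes_fun x) * 2 ^ w <= num_revealed A x c
     + 2 ^ w * (~~ tribes_fun x && errs A x c) + \sum_i (x \in hiding_zeros A c i))%N.
Proof.
case: (boolP (tribes_fun x)) => hf //=; rewrite mul1n.
rewrite -{1}[(2 ^ w)%N](card_ord (2 ^ w)) -(cardsC [set i | `[< reveals_tribe A x c i >]]).
rewrite -addnA leq_add2l; case: (boolP (errs A x c)) => he /=.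
- by rewrite muln1; apply: leq_trans (max_card _) _; rewrite card_ord leq_addr.
- rewrite muln0 -sum_nat_in_card; apply: leq_sum => i _.
  by rewrite !inE hf he.
Qed.

Lemma sum_fooled_ones_le (x : tinput w) :
  (\sum_i (x \in fooled_ones A c i) <= tribes_fun x && errs A x c)%N.
Proof.
case: (pickP (fun i => x \in fooled_ones A c i)) => [i hi | none]; last first.
  by rewrite big1 // => i _; rewrite none.
have := hi; rewrite inE => /and3P[he hfull _].
have -> : tribes_fun x by apply/existsP; exists i.
rewrite he (bigD1 i) //= hi big1 // => k hk; apply/eqP; rewrite eqb0 inE.
by apply/negP => /and3P[_ _ /forallP /(_ i)]; rewrite eq_sym hk hfull.
Qed.

Lemma count_zero_inputs :
  (2 ^ w * #|[set x : tinput w | ~~ tribes_fun x]| <=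
     \sum_x num_revealed A x c + 2 ^ w * \sum_x (errs A x c : nat))%N.
Proof.
have sum_hiding : (\sum_x \sum_i (x \in hiding_zeros A c i) <=
    2 ^ w * \sum_x \sum_i (x \in fooled_ones A c i))%N.
  rewrite exchange_big [X in (_ <= _ * X)%N]exchange_big big_distrr /=.
  by apply: leq_sum => i _; rewrite !sum_nat_in_card card_hiding_zeros.
have sum_errs : (\sum_x (~~ tribes_fun x && errs A x c)
    + \sum_x \sum_i (x \in fooled_ones A c i) <= \sum_x (errs A x c : nat))%N.
  rewrite -big_split /=; apply: leq_sum => x _.
  apply: leq_trans (leq_add (leqnn _) (sum_fooled_ones_le x)) _.
  by case: (tribes_fun x); case: (errs A x c).
rewrite -sum_nat_in_card big_distrr /=.
rewrite (eq_bigr (fun x => (~~ tribes_fun x) * 2 ^ w)%N); last first.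
  by move=> x _; rewrite inE mulnC.
apply: leq_trans (leq_sum _ (fun x _ => zero_input_weight x)) _.
rewrite !big_split /= -addnA leq_add2l -big_distrr /=.
by apply: leq_trans (leq_add (leqnn _) sum_hiding) _; rewrite -mulnDr leq_mul2l sum_errs orbT.
Qed.
End Switching.

Lemma subn_exp_le m n k :
  (n <= m)%N -> (m ^ k - n ^ k <= (m - n) * (k * m ^ k.-1))%N.
Proof.
move=> le_nm; rewrite subn_exp leq_mul2l -[X in (_ <= X * _)%N](card_ord k).
rewrite -sum_nat_const; apply/orP; right; apply: leq_sum => -[i lt_ik] _ /=.
have -> : (m ^ k.-1 = m ^ (k.-1 - i) * m ^ i)%N.
  by rewrite -expnD subnK // -ltnS prednK // (leq_ltn_trans _ lt_ik).
by rewrite leq_mul2l; case: i lt_ik => [|i] _; rewrite ?expn0 ?leq_exp2r ?le_nm ?orbT.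
Qed.

Lemma expn_double_le m : ((2 * m) ^ m <= 2 * (2 * m).-1 ^ m)%N.
Proof.
case: m => [//|m]; have := subn_exp_le m.+1 (leq_pred (2 * m.+1)).
have -> : (2 * m.+1 - (2 * m.+1).-1 = 1)%N by lia.
have -> : ((2 * m.+1) ^ m.+1 = 2 * (m.+1 * (2 * m.+1) ^ m))%N by rewrite expnS; lia.
move: (_ * _ ^ _)%N ((2 * m.+1).-1 ^ m.+1)%N => a b; lia.
Qed.

Lemma card_tinput w : #|{: tinput w}| = ((2 ^ w) ^ 2 ^ w)%N.
Proof. by rewrite card_ffun card_bool card_prod !card_ord -expnM mulnC. Qed.

Lemma card_tribes_zero_ge w :
  ((2 ^ w).-1 ^ 2 ^ w <= #|[set x : tinput w | ~~ tribes_fun x]|)%N.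
Proof.
pose no_full := [set~ ([ffun=> true] : {ffun 'I_w -> bool})].
pose uncurry (g : {ffun 'I_(2 ^ w) -> {ffun 'I_w -> bool}}) : tinput w :=
  [ffun v => g v.1 v.2].
have uncurry_inj : injective uncurry.
  move=> g1 g2 e; apply/ffunP => i; apply/ffunP => j.
  by have := congr1 (fun x : tinput w => x (i, j)) e; rewrite !ffunE.
have <- : #|@ffun_on 'I_(2 ^ w) no_full| = ((2 ^ w).-1 ^ 2 ^ w)%N.
  by rewrite card_ffun_on cardsC1 card_ffun card_bool !card_ord.
rewrite -(card_imset _ uncurry_inj); apply: subset_leq_card.
apply/fintype.subsetP => _ /imsetP[g /ffun_onP hg ->]; rewrite inE.
apply/existsP => -[i /forallP hi]; have := hg i; rewrite !inE => /eqP; apply.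
by apply/ffunP => j; have := hi j; rewrite !ffunE.
Qed.

Lemma card_tinput_le_tribes_zero w : (1 <= w)%N ->
  (#|{: tinput w}| <= 4 * #|[set x : tinput w | ~~ tribes_fun x]|)%N.
Proof.
case: w => [//|w] _; apply: leq_trans (leq_mul (leqnn 4) (card_tribes_zero_ge _)).
rewrite card_tinput expnS; have := expn_double_le (2 ^ w).
by rewrite -(leq_sqr _ (2 * _)) [in X in (_ <= X)%N]expnMn -!expnM [(2 ^ w * 2)%N]mulnC.
Qed.

Section Averages.
Variables (R : realType) (w : nat).
Implicit Types F G : tinput w -> tcosts w -> R.

Lemma avg_xcDZ F G (a : R) :
  avg_xc (fun x c => F x c + a * G x c) = avg_xc F + a * avg_xc G.
Proof.
rewrite /avg_xc (eq_bigr (fun x => \sum_c F x c + a * \sum_c G x c)).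
  by rewrite big_split /= -mulr_sumr mulrDr mulrCA.
by move=> x _; rewrite big_split /= mulr_sumr.
Qed.

Lemma avg_xc_ge0 F : (forall x c, 0 <= F x c) -> 0 <= avg_xc F.
Proof.
move=> F0; rewrite mulr_ge0 ?invr_ge0 //.
by apply: sumr_ge0 => x _; apply: sumr_ge0 => c _; apply: F0.
Qed.

Lemma avg_xc_ge F (k : R) :
  (forall c, k * #|{: tinput w}|%:R <= \sum_x F x c) -> k <= avg_xc F.
Proof.
move=> hF; have inputs0 : (0 < #|{: tinput w}|)%N by apply/card_gt0P; exists [ffun=> true].
have costs0 : (0 < #|{: tcosts w}|)%N by apply/card_gt0P; exists [ffun=> 1%g].
rewrite /avg_xc exchange_big /= ler_pdivlMl ?ltr0n ?muln_gt0 ?inputs0 //.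
have sum_const : \sum_(c : tcosts w) k * #|{: tinput w}|%:R =
    #|{: tinput w}|%:R * #|{: tcosts w}|%:R * k by rewrite sumr_const; ring.
by apply: le_trans (ler_sum _ (fun c _ => hF c)); rewrite sum_const natrM.
Qed.

Lemma measurable_avg_xc d (Om : measurableType d) (F : Om -> tinput w -> tcosts w -> R) :
  (forall x c, measurable_fun setT (fun om => F om x c)) ->
  measurable_fun setT (fun om => avg_xc (F om)).
Proof.
move=> mF; apply: measurable_funM; first exact: measurable_cst.
by apply: measurable_sum => x; apply: measurable_sum => c; apply: mF.
Qed.
End Averages.

Lemma avg_revealed_errs_ge (R : realType) w (A : det_alg R w) : (1 <= w)%N ->
  (2 ^ w)%:R / 4 <= avg_xc (fun x c => (num_revealed A x c)%:R : R)
                    + (2 ^ w)%:R * avg_xc (fun x c => (errs A x c)%:R : R).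
Proof.
move=> w_gt0; rewrite -avg_xcDZ; apply: avg_xc_ge => c.
have count : (2 ^ w * #|{: tinput w}| <=
    4 * (\sum_x num_revealed A x c + 2 ^ w * \sum_x (errs A x c : nat)))%N.
  apply: leq_trans (leq_mul (leqnn _) (card_tinput_le_tribes_zero w_gt0)) _.
  by rewrite mulnCA leq_mul2l count_zero_inputs orbT.
have -> : \sum_x ((num_revealed A x c)%:R + (2 ^ w)%:R * (errs A x c)%:R) =
    (\sum_x num_revealed A x c + 2 ^ w * \sum_x (errs A x c : nat))%N%:R :> R.
  by rewrite natrD natrM !natr_sum big_split /= mulr_sumr.
move: count; rewrite -(ler_nat R) !natrM; lra.
Qed.

Lemma integral_ge_of_pointwise (R : realType) d (Om : measurableType d)
    (P : probability Om R) (r e : Om -> R) (a N eps : R) :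
  measurable_fun setT r -> measurable_fun setT e ->
  (forall om, 0 <= r om) -> (forall om, 0 <= e om) -> 0 <= a -> 0 <= N ->
  (forall om, a <= r om + N * e om) ->
  (\int[P]_om (e om)%:E <= eps%:E)%E ->
  ((a - N * eps)%:E <= \int[P]_om (r om)%:E)%E.
Proof.
move=> mr me r0 e0 a0 N0 hle he.
have mNe : measurable_fun setT (fun om => N * e om) by apply: measurable_funM.
have int_a : (a%:E <= \int[P]_om (r om + N * e om)%:E)%E.
  rewrite -[a%:E]mule1 -(probability_setT P) -integral_cst //.
  apply: ge0_le_integral => //= [|om _]; last by rewrite lee_fin.
  exact/measurable_EFinP/measurable_funD.
have int_split : (\int[P]_om (r om + N * e om)%:E =
    \int[P]_om (r om)%:E + N%:E * \int[P]_om (e om)%:E)%E.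
{ under eq_integral do rewrite EFinD EFinM.
  rewrite ge0_integralD //= ?ge0_integralZl //=.
  all: by [move=> om _; rewrite lee_fin ?mulr_ge0 | exact/measurable_EFinP]. }
rewrite EFinB leeBlDr // EFinM; apply: le_trans int_a _; rewrite int_split.
by rewrite leeD2l // lee_wpmul2l ?lee_fin.
Qed.

Theorem mainTheorem13 (R : realType) (eps0 : R) :
  0 <= eps0 -> eps0 < 4^-1 ->
  exists C : R, 0 < C /\
    forall (w : nat), (1 <= w)%N ->
    forall (d : measure_display) (Om : measurableType d) (P : probability Om R)
           (A : Om -> det_alg R w),
      randomized_alg A ->
      (error_prob P A <= eps0%:E)%E ->
      ((C * (2 ^ w)%:R)%:E <= expected_revealed P A)%E.
Proof.
move=> _ eps0_lt; exists (4^-1 - eps0); split; first by rewrite subr_gt0.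
move=> w w_gt0 d Om P A [_ m_errs m_revealed] small_error.
have -> : (4^-1 - eps0) * (2 ^ w)%:R = (2 ^ w)%:R / 4 - (2 ^ w)%:R * eps0 by ring.
apply: integral_ge_of_pointwise small_error.
- exact: measurable_avg_xc m_revealed.
- exact: measurable_avg_xc m_errs.
- by move=> om; apply: avg_xc_ge0.
- by move=> om; apply: avg_xc_ge0.
- by rewrite divr_ge0.
- exact: ler0n.
- by move=> om; apply: avg_revealed_errs_ge.
Qed.
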